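(* Let $\Gamma$ be a graph of order $n$, size $m$, minimum degree $\delta$ and maximum degree $\Delta$. For every integer $k\in\{2-\delta,\dots,\delta\}$, $$\gamma_k^o(\Gamma)\ge\left\lceil\frac{(n+2\Delta+k)-\sqrt{(n+2\Delta+k)^2-4(2m+kn)}}{2}\right\rceil.$$
   Context: Graphs are finite and simple. For $S\subseteq V$ and $v\in V$, $\delta_S(v)$ is the number of neighbours of $v$ in $S$, $\overline{S}=V\setminus S$, and $\partial(S)$ the set of vertices of $\overline{S}$ with a neighbour in $S$. A nonempty $S$ is an offensive $k$-alliance if $\delta_S(v)\ge\delta_{\overline{S}}(v)+k$ for every $v\in\partial(S)$, and a global offensive $k$-alliance if moreover it is dominating; $\gamma_k^o(\Gamma)$ is the minimum cardinality of a global offensive $k$-alliance in $\Gamma$. *)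

From HB Require Import structures.
From mathcomp Require Import all_boot all_order all_algebra.
From mathcomp Require Import reals.
Set Implicit Arguments. Unset Strict Implicit. Unset Printing Implicit Defensive.
Import Order.TTheory GRing.Theory Num.Theory.

Definition simple_graph (T : finType) (e : rel T) : Prop :=
  symmetric e /\ irreflexive e.

Section Graph.
Variables (T : finType) (e : rel T).

Definition deg_in (S : {set T}) (v : T) : nat := #|[set u in S | e v u]|.
Definition deg (v : T) : nat := deg_in setT v.

Definition graph_order : nat := #|T|.
Definition edges : {set {set T}} :=
  [set E : {set T} | [exists u, exists v, e u v && (E == [set u; v])]].
Definition size_graph : nat := #|edges|.
(* for nonempty T every degree is < #|T|, so the identity #|T| is harmless *)
Definition min_deg : nat := \big[minn/#|T|]_(v : T) deg v.
Definition max_deg : nat := \max_(v : T) deg v.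

Definition boundary (S : {set T}) : {set T} :=
  [set v in ~: S | [exists u in S, e v u]].

Definition offensive_alliance (k : int) (S : {set T}) : bool :=
  (S != set0) &&
  [forall v in boundary S, ((deg_in S v)%:Z >= (deg_in (~: S) v)%:Z + k)%R].

Definition dominating (S : {set T}) : bool :=
  [forall v in ~: S, [exists u in S, e v u]].

Definition global_offensive_alliance (k : int) (S : {set T}) : bool :=
  offensive_alliance k S && dominating S.

(* gamma_k^o : minimum cardinality of a global offensive k-alliance
   (the default #|T| is attained by S = V when T is nonempty) *)
Definition gamma_o (k : int) : nat :=
  \big[minn/#|T|]_(S : {set T} | global_offensive_alliance k S) #|S|.

End Graph.

(** Let S be a global offensive k-alliance with s = |S|, and let c be the
    number of edges between S and its complement.  Domination puts every
    vertex outside S on the boundary, where the alliance condition reads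
    deg v + k <= 2 deg_S v; summing gives sum_{v not in S} deg v + k(n - s)
    <= 2c.  With sum_{v in S} deg v <= s Delta, the handshake lemma and
    c <= min(s(n - s), s Delta) this yields
    s^2 - (n + 2 Delta + k) s + (2m + kn) <= 0, so s is at least the smaller
    root of this quadratic. *)

From mathcomp Require Import all_boot all_order all_algebra.
From mathcomp Require Import reals lra zify.
Import Order.TTheory GRing.Theory Num.Theory.

Set Implicit Arguments.
Unset Strict Implicit.
Unset Printing Implicit Defensive.

Section SimpleGraph.
Variables (T : finType) (e : rel T).
Hypotheses (e_sym : symmetric e) (e_irr : irreflexive e).

Lemma deg_in_sum S v : deg_in e S v = \sum_(u in S) (e v u : nat).
Proof.
rewrite /deg_in -sum1_card big_mkcond [RHS]big_mkcond /=.
by apply: eq_bigr => u _; rewrite inE; case: (u \in S); case: (e v u).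
Qed.

Lemma deg_splitC S v : deg e v = deg_in e S v + deg_in e (~: S) v.
Proof.
rewrite /deg !deg_in_sum (bigID [in S]) /=.
by congr (_ + _); apply: eq_bigl => u; rewrite !inE.
Qed.

Lemma deg_in_le_card S v : deg_in e S v <= #|S|.
Proof. by apply: subset_leq_card; apply/subsetP => u; rewrite inE => /andP[]. Qed.

Lemma deg_in_le_max_deg S v : deg_in e S v <= max_deg e.
Proof. by rewrite (leq_trans _ (leq_bigmax v)) // (deg_splitC S v) leq_addr. Qed.

Lemma sum_deg_in_setC S :
  \sum_(v in ~: S) deg_in e S v = \sum_(u in S) deg_in e (~: S) u.
Proof.
under eq_bigr do rewrite deg_in_sum.
rewrite exchange_big; apply: eq_bigr => u _; rewrite deg_in_sum.
by apply: eq_bigr => v _; rewrite e_sym.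
Qed.

Lemma card_edge E : E \in edges e -> #|E| = 2.
Proof.
rewrite inE => /existsP[u /existsP[v /andP[huv /eqP->]]].
by rewrite cards2; case: eqP => // uv; rewrite uv e_irr in huv.
Qed.

Lemma card_edges_through v : #|[set E in edges e | v \in E]| = deg e v.
Proof.
have -> : [set E in edges e | v \in E] = [set [set v; u] | u in [set u | e v u]].
  apply/setP => E; rewrite inE; apply/andP/imsetP.
  - case; rewrite inE => /existsP[a /existsP[b /andP[hab /eqP->]]].
    rewrite !inE => /orP[] /eqP ->; first by exists b; rewrite ?inE.
    by exists a; rewrite ?inE 1?e_sym // setUC.
  - case=> u; rewrite inE => hu ->; rewrite !inE eqxx; split=> //.
    by apply/existsP; exists v; apply/existsP; exists u; rewrite hu eqxx.
rewrite card_in_imset; last first.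
  move=> a b; rewrite !inE => ha _ hab.
  have : a \in [set v; b] by rewrite -hab !inE eqxx orbT.
  by rewrite !inE => /orP[/eqP av | /eqP //]; rewrite -av e_irr in ha.
by apply: eq_card => u; rewrite !inE.
Qed.

Lemma handshake : \sum_v deg e v = 2 * size_graph e.
Proof.
have -> : 2 * size_graph e = \sum_(E in edges e) #|E|.
  by rewrite /size_graph -sum1_card big_distrr; apply: eq_bigr => E /card_edge.
under [RHS]eq_bigr do rewrite -sum1_card big_mkcond /=.
rewrite exchange_big; apply: eq_bigr => v _.
by rewrite -big_mkcondr sum1dep_card card_edges_through.
Qed.

End SimpleGraph.

Local Open Scope ring_scope.

Lemma global_offensive_alliance_setT (T : finType) (e : rel T) (k : int) :
  (0 < #|T|)%N -> global_offensive_alliance e k [set: T].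
Proof.
case/card_gt0P=> x _; rewrite /global_offensive_alliance -andbA; apply/and3P; split.
- by apply/set0Pn; exists x; rewrite inE.
- by apply/forallP => v; rewrite inE setCT inE.
- by apply/forallP => v; rewrite setCT inE.
Qed.

Lemma gamma_o_ge (T : finType) (e : rel T) (k : int) (b : int) :
  (0 < #|T|)%N ->
  (forall S, global_offensive_alliance e k S -> b <= #|S|%:Z) ->
  b <= (gamma_o e k)%:Z.
Proof.
move=> T_gt0 bS; apply: (big_ind (fun x : nat => b <= x%:Z)) => //.
- by rewrite -cardsT; apply/bS/global_offensive_alliance_setT.
- by move=> x y bx hy; rewrite /minn; case: ifP.
Qed.

Lemma alliance_outside_deg (T : finType) (e : rel T) (k : int) S v :
  global_offensive_alliance e k S -> v \in ~: S ->
  (deg e v)%:Z + k <= 2 * (deg_in e S v)%:Z.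
Proof.
case/andP=> /andP[_ /forallP alliance] /forallP dom vS.
have vB : v \in boundary e S by rewrite inE vS (implyP (dom v) vS).
have := implyP (alliance v) vB; rewrite (deg_splitC e S v) PoszD; lia.
Qed.

Lemma alliance_card_quadratic (R : realFieldType) (T : finType) (e : rel T)
    (k : int) (S : {set T}) :
  symmetric e -> irreflexive e -> global_offensive_alliance e k S ->
  (#|S|%:R : R) ^+ 2
    - ((graph_order T)%:R + 2 * (max_deg e)%:R + k%:~R) * #|S|%:R
    + (2 * (size_graph e)%:R + k%:~R * (graph_order T)%:R) <= 0.
Proof.
move=> e_sym e_irr allS.
set s : R := #|S|%:R; set n : R := (graph_order T)%:R.
set m : R := (size_graph e)%:R; set D : R := (max_deg e)%:R; set kR : R := k%:~R.
pose c : R := #|~: S|%:R.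
pose cut : R := \sum_(v in ~: S) (deg_in e S v)%:R.
pose degS : R := \sum_(v in S) (deg e v)%:R.
pose degC : R := \sum_(v in ~: S) (deg e v)%:R.
have n_split : n = s + c by rewrite /n /s /c -natrD cardsC.
have degC_le : degC + kR * c <= 2 * cut.
  rewrite /degC /cut /c mulr_natr -sumr_const -big_split mulr_sumr /=.
  apply: ler_sum => v vS; have := alliance_outside_deg allS vS.
  by rewrite -(ler_int R) rmorphD rmorphM.
have handshakeR : degS + degC = 2 * m.
  rewrite /degS /degC -!natr_sum -natrD /m -natrM -(handshake e_sym e_irr).
  by rewrite [in RHS](bigID [in S]) /=; congr (_ + _)%:R; apply: eq_bigl => v; rewrite inE.
have degS_le : degS <= s * D.
  rewrite /degS -natr_sum /s /D -natrM ler_nat -sum_nat_const.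
  by apply: leq_sum => v _; apply: leq_bigmax.
have cut_le_card : cut <= s * c.
  rewrite /cut -natr_sum /s /c -natrM ler_nat mulnC -sum_nat_const.
  by apply: leq_sum => v _; apply: deg_in_le_card.
have cut_le_deg : cut <= s * D.
  rewrite /cut -natr_sum /s /D -natrM ler_nat (sum_deg_in_setC e_sym) -sum_nat_const.
  by apply: leq_sum => v _; apply: deg_in_le_max_deg.
rewrite n_split; nra.
Qed.

Lemma small_root_le (R : rcfType) (B C s : R) :
  s ^+ 2 - B * s + C <= 0 -> (B - Num.sqrt (B ^+ 2 - 4 * C)) / 2 <= s.
Proof.
move=> quad.
have sq_le : (B - 2 * s) ^+ 2 <= B ^+ 2 - 4 * C by nra.
have : B - 2 * s <= Num.sqrt (B ^+ 2 - 4 * C).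
  by rewrite (le_trans (ler_norm _)) // -sqrtr_sqr ler_wsqrtr.
lra.
Qed.

Theorem mainTheorem17 (R : realType) (T : finType) (e : rel T)
  (He : simple_graph e) (Hn : (0 < #|T|)%N) (k : int)
  (Hk1 : 2%:Z - (min_deg e)%:Z <= k) (Hk2 : k <= (min_deg e)%:Z) :
  let n : R := (graph_order T)%:R in
  let m : R := (size_graph e)%:R in
  let D : R := (max_deg e)%:R in
  let kR : R := k%:~R in
  Num.ceil (((n + 2 * D + kR) - Num.sqrt ((n + 2 * D + kR) ^+ 2 - 4 * (2 * m + kR * n))) / 2)
    <= (gamma_o e k)%:Z.
Proof.
case: He => e_sym e_irr /=.
apply: gamma_o_ge => // S allS.
rewrite ceil_le_int; apply: small_root_le.
exact: (alliance_card_quadratic R e_sym e_irr allS).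
Qed.
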